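(* Let $\boldsymbol{\phi}\in\mathcal{D}_{\boldsymbol{\phi}}(\boldsymbol{r})$. If for all $i\in\mathcal{V}$, $j\in\{0\}\cup\mathcal{V}$ and $(a,k)\in\mathcal{S}$, $$\delta_{ij}(a,k)\begin{cases}=\min_{j'\in\{0\}\cup\mathcal{V}}\delta_{ij'}(a,k), & \text{if }\phi_{ij}(a,k)>0,\\ \ge\min_{j'\in\{0\}\cup\mathcal{V}}\delta_{ij'}(a,k), & \text{if }\phi_{ij}(a,k)=0,\end{cases}$$ then $\boldsymbol{\phi}$ is a global optimal solution of $\min_{\boldsymbol{\phi}\in\mathcal{D}_{\boldsymbol{\phi}}(\boldsymbol{r})}T(\boldsymbol{\phi})$.
   Context: Service-chain computing network model. $\mathcal{G}=(\mathcal{V},\mathcal{E})$ is a directed, strongly connected graph whose links are bidirectional ($(i,j)\in\mathcal{E}\Rightarrow(j,i)\in\mathcal{E}$). $\mathcal{A}$ is a finite set of applications; application $a$ has a destination $d_a\in\mathcal{V}$ and a chain of $|\mathcal{T}_a|$ tasks performed in order. The set of stages is $\mathcal{S}=\{(a,k): a\in\mathcal{A}, k=0,1,\dots,|\mathcal{T}_a|\}$; stage $(a,k)$ denotes packets that have completed the first $k$ tasks of $a$, and has packet size $L_{(a,k)}>0$. Exogenous input rates are $r_i(a)\ge 0$ (stage $(a,0)$ packets injected at node $i$), $\boldsymbol{r}=[r_i(a)]$. The forwarding strategy $\boldsymbol{\phi}=[\phi_{ij}(a,k)]_{(a,k)\in\mathcal{S},i\in\mathcal{V},j\in\{0\}\cup\mathcal{V}}$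 has $\phi_{ij}(a,k)\in[0,1]$; for $j\in\mathcal{V}$ it is the fraction of node $i$'s stage-$(a,k)$ traffic sent to node $j$ (with $\phi_{ij}(a,k)=0$ if $(i,j)\notin\mathcal{E}$), and $\phi_{i0}(a,k)$ is the fraction sent to $i$'s local processor, which converts each stage-$(a,k)$ packet into one stage-$(a,k+1)$ packet; $\phi_{i0}(a,|\mathcal{T}_a|)=0$. Flow conservation: $\sum_{j\in\{0\}\cup\mathcal{V}}\phi_{ij}(a,k)=0$ if $k=|\mathcal{T}_a|$ and $i=d_a$, and $=1$ otherwise. Traffic $t_i(a,k)$ satisfies $t_i(a,0)=\sum_{j\in\mathcal{V}}t_j(a,0)\phi_{ji}(a,0)+r_i(a)$ and, for $k\ge1$, $t_i(a,k)=\sum_{j\in\mathcal{V}}t_j(a,k)\phi_{ji}(a,k)+t_i(a,k-1)\phi_{i0}(a,k-1)$. Link flows $f_{ij}(a,k)=t_i(a,k)\phi_{ij}(a,k)$, processor inputs $g_i(a,k)=t_i(a,k)\phi_{i0}(a,k)$, total link flow $F_{ij}=\sum_{(a,k)\in\mathcal{S}}L_{(a,k)}f_{ij}(a,k)$, computation workload $G_i=\sum_{(a,k)\in\mathcal{S}}w_i(a,k)g_i(a,k)$ with weights $w_i(a,k)>0$. Link costs $D_{ij}(\cdot)$ and computation costs $C_i(\cdot)$ are increasing, continuously differentiable, convex functions (possibly taking value $+\infty$ outside a domain). Total cost $T(\boldsymbol{\phi})=\sum_{(i,j)\in\mathcal{E}}D_{ij}(F_{ij})+\sum_{i\in\mathcal{V}}C_i(G_i)$.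 The feasible set $\mathcal{D}_{\boldsymbol{\phi}}(\boldsymbol{r})$ consists of $\boldsymbol{\phi}$ satisfying flow conservation with all $D_{ij}(F_{ij})<\infty$ and $C_i(G_i)<\infty$; $\boldsymbol{r}$ is such that this set is nonempty. Marginal quantities: $\partial T/\partial t_i(a,k)$ is the marginal total cost of an additional exogenous injection of stage-$(a,k)$ traffic at node $i$ (with $\boldsymbol{\phi}$ fixed); it satisfies $\partial T/\partial t_{d_a}(a,|\mathcal{T}_a|)=0$, for $k=|\mathcal{T}_a|$: $\frac{\partial T}{\partial t_i(a,k)}=\sum_{j\in\mathcal{V}}\phi_{ij}(a,k)\big(L_{(a,k)}D'_{ij}(F_{ij})+\frac{\partial T}{\partial t_j(a,k)}\big)$, and for $k<|\mathcal{T}_a|$: $\frac{\partial T}{\partial t_i(a,k)}=\phi_{i0}(a,k)\big(w_i(a,k)C'_i(G_i)+\frac{\partial T}{\partial t_i(a,k+1)}\big)+\sum_{j\in\mathcal{V}}\phi_{ij}(a,k)\big(L_{(a,k)}D'_{ij}(F_{ij})+\frac{\partial T}{\partial t_j(a,k)}\big)$. Modified marginals: $\delta_{ij}(a,k)=L_{(a,k)}D'_{ij}(F_{ij})+\frac{\partial T}{\partial t_j(a,k)}$ for $j\in\mathcal{V}$ with $(i,j)\in\mathcal{E}$, $\delta_{i0}(a,k)=w_i(a,k)C'_i(G_i)+\frac{\partial T}{\partial t_i(a,k+1)}$ for $k<|\mathcal{T}_a|$, and $\delta_{ij}(a,k)=\infty$ for $(i,j)\notin\mathcal{E}$ and $\delta_{i0}(a,|\mathcal{T}_a|)=\infty$.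 *)

From HB Require Import structures.
From mathcomp Require Import all_boot all_order all_algebra.
From mathcomp Require Import reals constructive_ereal.
Set Implicit Arguments. Unset Strict Implicit. Unset Printing Implicit Defensive.
Import Order.TTheory GRing.Theory Num.Theory.
Local Open Scope ring_scope.

Section CostFunctions.
Variable R : realType.

Definition deriv_within (f : R -> R) (dom : R -> Prop) (x d : R) : Prop :=
  forall e : R, 0 < e -> exists2 del : R, 0 < del &
    forall y, dom y -> y != x -> `|y - x| < del ->
      `|(f y - f x) / (y - x) - d| < e.

Definition cont_within (g : R -> R) (dom : R -> Prop) (x : R) : Prop :=
  forall e : R, 0 < e -> exists2 del : R, 0 < del &
    forall y, dom y -> `|y - x| < del -> `|g y - g x| < e.

(* A cost function R -> R U {+oo}: it is finite exactly on dom, given by f there;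
   f' is its derivative.  Increasing, continuously differentiable, convex
   (the effective domain of a convex extended function is convex). *)
Definition cost_fun (f : R -> R) (dom : R -> Prop) (f' : R -> R) : Prop :=
  [/\ (forall x y l, dom x -> dom y -> 0 <= l <= 1 -> dom (l * x + (1 - l) * y)),
      (forall x y l, dom x -> dom y -> 0 <= l <= 1 ->
          f (l * x + (1 - l) * y) <= l * f x + (1 - l) * f y),
      (forall x y, dom x -> dom y -> x < y -> f x < f y),
      (forall x, dom x -> deriv_within f dom x (f' x)) &
      (forall x, dom x -> cont_within f' dom x)].
End CostFunctions.

Section Model.
Variable R : realType.
Variables (V A : finType).
Variable E : rel V.
Variable dest : A -> V.
Variable K : A -> nat.           (* |T_a|; stages (a,k) with k <= K a *)
Variable L : A -> nat -> R.      (* packet sizes L_(a,k) *)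
Variable w : V -> A -> nat -> R. (* computation weights w_i(a,k) *)
Variable r : V -> A -> R.        (* exogenous input rates r_i(a) *)

(* phi i (Some j) a k = phi_ij(a,k); phi i None a k = phi_i0(a,k) *)
Definition strategy := V -> option V -> A -> nat -> R.

Definition valid_strategy (phi : strategy) : Prop :=
  [/\ (forall i j a k, (k <= K a)%N -> 0 <= phi i j a k <= 1),
      (forall i j a k, (k <= K a)%N -> ~~ E i j -> phi i (Some j) a k = 0),
      (forall i a, phi i None a (K a) = 0) &
      (forall i a k, (k <= K a)%N ->
         \sum_(j : option V) phi i j a k =
           (if (k == K a) && (i == dest a) then 0 else 1))].

Definition is_traffic (phi : strategy) (t : V -> A -> nat -> R) : Prop :=
  [/\ (forall i a k, (k <= K a)%N -> 0 <= t i a k),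
      (forall i a, t i a 0%N = \sum_(j : V) t j a 0%N * phi j (Some i) a 0%N + r i a) &
      (forall i a k, (1 <= k <= K a)%N ->
         t i a k = \sum_(j : V) t j a k * phi j (Some i) a k
                   + t i a k.-1 * phi i None a k.-1)].

Definition linkF (phi : strategy) (t : V -> A -> nat -> R) (i j : V) : R :=
  \sum_(a : A) \sum_(k < (K a).+1) L a k * (t i a k * phi i (Some j) a k).

Definition compG (phi : strategy) (t : V -> A -> nat -> R) (i : V) : R :=
  \sum_(a : A) \sum_(k < (K a).+1) w i a k * (t i a k * phi i None a k).

Variables (D : V -> V -> R -> R) (Ddom : V -> V -> R -> Prop) (D' : V -> V -> R -> R).
Variables (C : V -> R -> R) (Cdom : V -> R -> Prop) (C' : V -> R -> R).

Definition total_cost (phi : strategy) (t : V -> A -> nat -> R) : R :=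
  \sum_(i : V) \sum_(j : V | E i j) D i j (linkF phi t i j)
  + \sum_(i : V) C i (compG phi t i).

(* phi (with its traffic t) lies in D_phi(r): conservation and finite costs *)
Definition feasible (phi : strategy) (t : V -> A -> nat -> R) : Prop :=
  [/\ valid_strategy phi, is_traffic phi t,
      (forall i j, E i j -> Ddom i j (linkF phi t i j)) &
      (forall i, Cdom i (compG phi t i))].

(* p i a k = dT/dt_i(a,k) : the marginal-cost recursion *)
Definition is_marginal (phi : strategy) (t : V -> A -> nat -> R)
    (p : V -> A -> nat -> R) : Prop :=
  [/\ (forall a, p (dest a) a (K a) = 0),
      (forall i a, p i a (K a) =
         \sum_(j : V) phi i (Some j) a (K a) *
            (L a (K a) * D' i j (linkF phi t i j) + p j a (K a))) &
      (forall i a k, (k < K a)%N ->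
         p i a k = phi i None a k * (w i a k * C' i (compG phi t i) + p i a k.+1)
                 + \sum_(j : V) phi i (Some j) a k *
                     (L a k * D' i j (linkF phi t i j) + p j a k))].

Definition delta (phi : strategy) (t : V -> A -> nat -> R) (p : V -> A -> nat -> R)
    (i : V) (j : option V) (a : A) (k : nat) : \bar R :=
  match j with
  | Some j => if E i j then (L a k * D' i j (linkF phi t i j) + p j a k)%:E
              else +oo%E
  | None => if (k < K a)%N then (w i a k * C' i (compG phi t i) + p i a k.+1)%:E
            else +oo%E
  end.

Definition min_delta (phi : strategy) (t : V -> A -> nat -> R) (p : V -> A -> nat -> R)
    (i : V) (a : A) (k : nat) : \bar R :=
  \big[Order.min/+oo%E]_(j' : option V) delta phi t p i j' a k.

End Model.

From HB Require Import structures.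
From mathcomp Require Import all_boot all_order all_algebra.
From mathcomp Require Import reals constructive_ereal.
From mathcomp Require Import ring lra.
Set Implicit Arguments. Unset Strict Implicit. Unset Printing Implicit Defensive.
Import Order.TTheory GRing.Theory Num.Theory.
Local Open Scope ring_scope.

(* The costs are convex, so each lies above its tangent at the flows of phi:
   T(phi') - T(phi) is at least the difference of the linearized costs, where
   every link and processor is priced at its marginal cost under phi.  Pricing
   each unit of stage-(a,k) traffic at node i by the marginal p_i(a,k), flow
   conservation makes these potentials telescope along the service chain, so
   the linearized cost of any feasible psi equals the exogenous input priced
   at p plus the traffic-weighted excesses sum_j psi_ij(a,k) delta_ij(a,k) -
   p_i(a,k).  The marginal recursion makes the excesses of phi vanish; those
   of phi' are nonnegative because phi only uses minimizing deltas. *)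

Lemma convex_tangent_le (R : realType) (f f' : R -> R) (dom : R -> Prop) x y :
  (forall x y l, dom x -> dom y -> 0 <= l <= 1 -> dom (l * x + (1 - l) * y)) ->
  (forall x y l, dom x -> dom y -> 0 <= l <= 1 ->
     f (l * x + (1 - l) * y) <= l * f x + (1 - l) * f y) ->
  deriv_within f dom x (f' x) -> dom x -> dom y ->
  f x + f' x * (y - x) <= f y.
Proof.
move=> dom_convex f_convex f_deriv dx dy.
have [->|yNx] := eqVneq y x; first by rewrite subrr mulr0 addr0.
rewrite leNgt; apply/negP => tangent_gt.
set gap := f x + f' x * (y - x) - f y.
have gap_gt0 : 0 < gap by rewrite subr_gt0.
have yx_neq0 : y - x != 0 by rewrite subr_eq0.
have yx_gt0 : 0 < `|y - x| by rewrite normr_gt0.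
have [del del_gt0 quotient_close] := f_deriv _ (divr_gt0 gap_gt0 yx_gt0).
set l := Num.min 1 (del / (2 * `|y - x|)).
have l_gt0 : 0 < l by rewrite lt_min ltr01 divr_gt0 // mulr_gt0.
have l01 : 0 <= l <= 1 by rewrite (ltW l_gt0) ge_min lexx.
set z := l * y + (1 - l) * x.
have zx : z - x = l * (y - x) by rewrite /z; ring.
have zx_neq0 : z - x != 0 by rewrite zx mulf_neq0 ?(gt_eqF l_gt0).
have zx_lt : `|z - x| < del.
  rewrite zx normrM gtr0_norm //.
  have l_le : l <= del / (2 * `|y - x|) by rewrite ge_min lexx orbT.
  apply: (le_lt_trans (ler_wpM2r (ltW yx_gt0) l_le)).
  rewrite [X in X < _](_ : _ = del / 2); first lra.
  by field; rewrite gt_eqF.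
(* the chord from x to z is below the secant to y, the tangent is above it *)
have chord : f z <= l * f y + (1 - l) * f x by exact: f_convex.
have zNx : z != x by rewrite -subr_eq0.
have zx_gt0 : 0 < `|z - x| by rewrite normr_gt0.
have := quotient_close z (dom_convex _ _ _ dy dx l01) zNx zx_lt.
(* multiply the difference quotient estimate by |z - x| = l |y - x| *)
rewrite -(ltr_pM2r zx_gt0) -normrM mulrBl divfK //.
rewrite {2}zx normrM (gtr0_norm l_gt0) mulrCA divfK ?gt_eqF //.
case/ltr_normlP=> below _.
rewrite /gap zx in below; nra.
Qed.

Lemma sum_mul_le_of_level (R : numDomainType) (X : finType) (dr f f' : X -> R) mu :
  (forall j, 0 <= f j) -> (forall j, 0 <= f' j) -> \sum_j f j = \sum_j f' j ->
  (forall j, 0 < f j -> dr j = mu) -> (forall j, 0 < f' j -> mu <= dr j) ->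
  \sum_j f j * dr j <= \sum_j f' j * dr j.
Proof.
move=> f_ge0 f'_ge0 sum_eq f_level f'_above.
have -> : \sum_j f j * dr j = \sum_j f' j * mu.
  rewrite -mulr_suml -sum_eq mulr_suml; apply: eq_bigr => j _.
  have [fj0|fj_neq0] := eqVneq (f j) 0; first by rewrite fj0 !mul0r.
  by rewrite f_level // lt_def fj_neq0 f_ge0.
apply: ler_sum => j _.
have [f'j0|f'j_neq0] := eqVneq (f' j) 0; first by rewrite f'j0 !mul0r.
by rewrite ler_wpM2l // f'_above // lt_def f'j_neq0 f'_ge0.
Qed.

Lemma sum_mul_le_of_argmin (R : realDomainType) (X : finType) (d : X -> \bar R)
    (dr f f' : X -> R) :
  (forall j, 0 <= f j) -> (forall j, 0 <= f' j) -> \sum_j f j = \sum_j f' j ->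
  (forall j, 0 < f j -> d j = (dr j)%:E) -> (forall j, 0 < f' j -> d j = (dr j)%:E) ->
  (forall j, 0 < f j -> d j = \big[Order.min/+oo%E]_j' d j') ->
  \sum_j f j * dr j <= \sum_j f' j * dr j.
Proof.
move=> f_ge0 f'_ge0 sum_eq f_fin f'_fin f_argmin.
have [j0 fj0_gt0|f_le0] := pickP (fun j => 0 < f j).
  apply: (sum_mul_le_of_level (mu := dr j0)) => // j fj_gt0.
    by apply/eqP; rewrite -eqe -(f_fin j) // -(f_fin j0) // !f_argmin.
  by rewrite -lee_fin -(f'_fin j) // -(f_fin j0) // f_argmin // bigmin_le.
have f_eq0 j : f j = 0 by apply/eqP; rewrite eq_le f_ge0 andbT leNgt f_le0.
apply: (sum_mul_le_of_level (mu := 0)) => // j; first by rewrite f_eq0 ltxx.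
move=> f'j_gt0; have := sum_eq; rewrite big1 // => /esym/eqP.
rewrite psumr_eq0 // => /allP/(_ j (mem_index_enum _))/eqP f'j0.
by rewrite f'j0 ltxx in f'j_gt0.
Qed.

Lemma sum_option (M : nmodType) (V : finType) (F : option V -> M) :
  \sum_(j : option V) F j = F None + \sum_(j : V) F (Some j).
Proof.
rewrite (bigD1 None) //=; congr (_ + _).
rewrite (reindex_omap Some id) //; last by case.
by apply: eq_bigl => j; rewrite eqxx.
Qed.

Lemma exchange_sum_dep (M : nmodType) (I B : finType) (n : B -> nat)
    (F : forall b : B, 'I_(n b) -> I -> M) :
  \sum_(b : B) \sum_(k < n b) \sum_(i : I) F b k i =
  \sum_(i : I) \sum_(b : B) \sum_(k < n b) F b k i.
Proof. by under eq_bigr do rewrite exchange_big; rewrite exchange_big. Qed.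

Section LinearizedCost.
Variables (R : realType) (V A : finType) (K : A -> nat).
Variables (L : A -> nat -> R) (w : V -> A -> nat -> R) (r : V -> A -> R).
Variables (c : V -> V -> R) (g : V -> R) (p : V -> A -> nat -> R).

Definition hop_price (i : V) (a : A) (k : nat) (j : option V) : R :=
  if j is Some j then L a k * c i j else w i a k * g i.

Definition hop_potential (i : V) (a : A) (k : nat) (j : option V) : R :=
  if j is Some j then p j a k else p i a k.+1.

(* For c, g the marginal link and processor costs of phi, the price plus the
   potential of a hop j is the paper's delta_ij(a,k) wherever that is finite. *)
Definition expected_hop_cost (psi : strategy R V A) (i : V) (a : A) (k : nat) : R :=
  \sum_(j : option V) psi i j a k * (hop_price i a k j + hop_potential i a k j).

Definition linearized_cost (psi : strategy R V A) (s : V -> A -> nat -> R) : R :=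
  \sum_(i : V) \sum_(j : V) c i j * linkF K L psi s i j
  + \sum_(i : V) g i * compG K w psi s i.

Variables (psi : strategy R V A) (s : V -> A -> nat -> R).
Hypothesis psi_last : forall i a, psi i None a (K a) = 0.
Hypothesis s_traffic : is_traffic K r psi s.

Let stage_price (a : A) (k : nat) : R :=
  \sum_(i : V) s i a k * \sum_(j : option V) psi i j a k * hop_price i a k j.

Let processed_potential (a : A) (k : nat) : R :=
  \sum_(i : V) s i a k * psi i None a k * p i a k.+1.

Let entering_potential (a : A) (k : nat) : R :=
  if k is k'.+1 then processed_potential a k' else \sum_(i : V) r i a * p i a 0%N.

Lemma traffic_potential_balance a k : (k <= K a)%N ->
  \sum_(i : V) s i a k * p i a k =
  \sum_(i : V) s i a k * \sum_(j : V) psi i (Some j) a k * p j a k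
  + entering_potential a k.
Proof.
case: s_traffic => _ s_stage0 s_stage k_le.
have inflow i : s i a k = \sum_(j : V) s j a k * psi j (Some i) a k
    + (if k is k'.+1 then s i a k' * psi i None a k' else r i a).
  by case: k k_le => [|k'] k_le; [exact: s_stage0 | exact: s_stage].
under eq_bigr do rewrite inflow mulrDl mulr_suml.
rewrite big_split /= exchange_big; congr (_ + _).
  apply: eq_bigr => i _; rewrite mulr_sumr.
  by apply: eq_bigr => j _; rewrite mulrA.
by case: k {k_le inflow}.
Qed.

Lemma stage_identity a k : (k <= K a)%N ->
  \sum_(i : V) s i a k * (expected_hop_cost psi i a k - p i a k) =
  stage_price a k + processed_potential a k - entering_potential a k.
Proof.
move=> k_le.
have split_hop i : expected_hop_cost psi i a k =
    \sum_(j : option V) psi i j a k * hop_price i a k j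
    + (psi i None a k * p i a k.+1 + \sum_(j : V) psi i (Some j) a k * p j a k).
  rewrite -(sum_option (fun j => psi i j a k * hop_potential i a k j)) -big_split.
  by apply: eq_bigr => j _; rewrite mulrDr.
under eq_bigr do rewrite split_hop !mulrBr !mulrDr.
rewrite sumrB !big_split /= traffic_potential_balance //.
rewrite /stage_price /processed_potential.
under [X in _ = _ + X - _]eq_bigr do rewrite -mulrA.
ring.
Qed.

Lemma application_identity a :
  \sum_(k < (K a).+1) stage_price a k =
  \sum_(i : V) r i a * p i a 0%N
  + \sum_(k < (K a).+1) \sum_(i : V) s i a k * (expected_hop_cost psi i a k - p i a k).
Proof.
have telescope : \sum_(k < (K a).+1) (processed_potential a k - entering_potential a k)
    = - \sum_(i : V) r i a * p i a 0%N.
  rewrite -(big_mkord xpredT (fun k => processed_potential a k - entering_potential a k)).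
  rewrite (telescope_sumr_eq (entering_potential a)) //= /processed_potential.
  by rewrite big1 ?sub0r // => i _; rewrite psi_last mulr0 mul0r.
rewrite [X in _ = _ + X](eq_bigr (fun k : 'I_(K a).+1 => stage_price a k
    + (processed_potential a k - entering_potential a k))); last first.
  by move=> k _; rewrite stage_identity ?addrA // -ltnS.
by rewrite big_split /= telescope addrCA subrr addr0.
Qed.

Lemma linearized_cost_decomposition :
  linearized_cost psi s =
  \sum_(a : A) (\sum_(i : V) r i a * p i a 0%N
    + \sum_(k < (K a).+1) \sum_(i : V) s i a k * (expected_hop_cost psi i a k - p i a k)).
Proof.
under [RHS]eq_bigr do rewrite -application_identity.
have stage_split a k : stage_price a k =
    \sum_(i : V) g i * (w i a k * (s i a k * psi i None a k))
    + \sum_(i : V) \sum_(j : V) c i j * (L a k * (s i a k * psi i (Some j) a k)).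
  rewrite /stage_price -big_split; apply: eq_bigr => i _ /=.
  rewrite sum_option /= mulrDr mulr_sumr; congr (_ + _); first by ring.
  by apply: eq_bigr => j _; ring.
under [RHS]eq_bigr do under eq_bigr do rewrite stage_split.
rewrite /linearized_cost addrC; under [RHS]eq_bigr do rewrite big_split.
rewrite big_split /= !exchange_sum_dep; congr (_ + _).
  apply: eq_bigr => i _; rewrite /compG mulr_sumr; apply: eq_bigr => a _.
  by rewrite mulr_sumr.
apply: eq_bigr => i _; rewrite exchange_sum_dep.
apply: eq_bigr => j _; rewrite /linkF mulr_sumr; apply: eq_bigr => a _.
by rewrite mulr_sumr.
Qed.
End LinearizedCost.

Lemma cost_fun_tangent_le (R : realType) (f f' : R -> R) (dom : R -> Prop) x y :
  cost_fun f dom f' -> dom x -> dom y -> f x + f' x * (y - x) <= f y.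
Proof. by case=> dom_convex f_convex _ f_deriv _ dx; apply: convex_tangent_le; auto. Qed.

Lemma linkF_offedge (R : realType) (V A : finType) (E : rel V) (dest : A -> V)
    (K : A -> nat) (L : A -> nat -> R) (psi : strategy R V A) (s : V -> A -> nat -> R) i j :
  valid_strategy E dest K psi -> ~~ E i j -> linkF K L psi s i j = 0.
Proof.
case=> _ psi_offedge _ _ nEij; apply: big1 => a _; apply: big1 => k _.
by rewrite psi_offedge ?mulr0 // -ltnS.
Qed.

Section Optimality.
Variables (R : realType) (V A : finType) (E : rel V) (dest : A -> V) (K : A -> nat).
Variables (L : A -> nat -> R) (w : V -> A -> nat -> R) (r : V -> A -> R).
Variables (D : V -> V -> R -> R) (Ddom : V -> V -> R -> Prop) (D' : V -> V -> R -> R).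
Variables (C : V -> R -> R) (Cdom : V -> R -> Prop) (C' : V -> R -> R).
Variables (phi : strategy R V A) (t p : V -> A -> nat -> R).

Let c i j := D' i j (linkF K L phi t i j).
Let g i := C' i (compG K w phi t i).

Lemma total_cost_tangent_le (phi' : strategy R V A) (t' : V -> A -> nat -> R) :
  (forall i j, E i j -> cost_fun (D i j) (Ddom i j) (D' i j)) ->
  (forall i, cost_fun (C i) (Cdom i) (C' i)) ->
  feasible E dest K L w r Ddom Cdom phi t -> feasible E dest K L w r Ddom Cdom phi' t' ->
  total_cost E K L w D C phi t
  + (linearized_cost K L w c g phi' t' - linearized_cost K L w c g phi t)
  <= total_cost E K L w D C phi' t'.
Proof.
move=> D_cost C_cost [phi_valid _ F_dom G_dom] [phi'_valid _ F'_dom G'_dom].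
have on_edges psi s : valid_strategy E dest K psi ->
    \sum_(i : V) \sum_(j : V) c i j * linkF K L psi s i j =
    \sum_(i : V) \sum_(j : V | E i j) c i j * linkF K L psi s i j.
  move=> psi_valid; apply: eq_bigr => i _; rewrite [RHS]big_mkcond.
  by apply: eq_bigr => j _; case: ifP => // /negbT /(linkF_offedge _ _ psi_valid) ->; rewrite mulr0.
rewrite /linearized_cost !on_edges // opprD [X in _ + X]addrACA -!sumrB.
rewrite /total_cost addrACA.
apply: lerD; rewrite -big_split; apply: ler_sum => i _.
  rewrite -sumrB -big_split; apply: ler_sum => j Eij /=.
  by rewrite -mulrBr; apply: cost_fun_tangent_le; auto.
by rewrite /= -mulrBr; apply: cost_fun_tangent_le.
Qed.

Hypothesis phi_valid : valid_strategy E dest K phi.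

Lemma delta_on_support (psi : strategy R V A) i j a k :
  valid_strategy E dest K psi -> (k <= K a)%N -> 0 < psi i j a k ->
  delta E K L w D' C' phi t p i j a k =
  (hop_price L w c g i a k j + hop_potential p i a k j)%:E.
Proof.
case=> _ psi_offedge psi_last _ k_le; case: j => [j|] /=; case: ifP => // /negbT.
  by move=> /(psi_offedge _ _ _ _ k_le) ->; rewrite ltxx.
rewrite -leqNgt => k_ge; have k_last : k = K a by apply/eqP; rewrite eqn_leq k_le.
by rewrite k_last psi_last ltxx.
Qed.

Hypothesis p_marginal : is_marginal dest K L w D' C' phi t p.
Hypothesis phi_argmin : forall i j a k, (k <= K a)%N -> 0 < phi i j a k ->
  delta E K L w D' C' phi t p i j a k = min_delta E K L w D' C' phi t p i a k.

Lemma expected_hop_cost_marginal i a k :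
  (k <= K a)%N -> expected_hop_cost L w c g p phi i a k = p i a k.
Proof.
case: p_marginal => _ p_last p_stage k_le; rewrite /expected_hop_cost sum_option /=.
have [k_lt|k_ge] := ltnP k (K a); first by rewrite (p_stage i a k k_lt) addrC.
have -> : k = K a by apply/eqP; rewrite eqn_leq k_le.
by case: phi_valid => _ _ phi_last _; rewrite (p_last i a) phi_last mul0r add0r.
Qed.

Lemma marginal_le_expected_hop_cost (phi' : strategy R V A) i a k :
  valid_strategy E dest K phi' ->
  (k <= K a)%N -> p i a k <= expected_hop_cost L w c g p phi' i a k.
Proof.
move=> phi'_valid k_le; rewrite -{1}(expected_hop_cost_marginal i k_le).
have [phi_01 _ _ phi_sum] := phi_valid; have [phi'_01 _ _ phi'_sum] := phi'_valid.
apply: (sum_mul_le_of_argmin (d := fun j => delta E K L w D' C' phi t p i j a k)).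
- by move=> j; case/andP: (phi_01 i j a k k_le).
- by move=> j; case/andP: (phi'_01 i j a k k_le).
- by rewrite phi_sum // phi'_sum.
- by move=> j; apply: delta_on_support.
- by move=> j; apply: delta_on_support.
- by move=> j /(phi_argmin k_le).
Qed.

Lemma linearized_cost_marginal : is_traffic K r phi t ->
  linearized_cost K L w c g phi t = \sum_(a : A) \sum_(i : V) r i a * p i a 0%N.
Proof.
have [_ _ phi_last _] := phi_valid; move=> t_traffic.
rewrite (linearized_cost_decomposition L w c g p phi_last t_traffic).
apply: eq_bigr => a _; rewrite [X in _ + X]big1 ?addr0 // => k _; apply: big1 => i _.
by rewrite expected_hop_cost_marginal ?subrr ?mulr0 // -ltnS.
Qed.

Lemma marginal_le_linearized_cost (phi' : strategy R V A) (t' : V -> A -> nat -> R) :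
  valid_strategy E dest K phi' -> is_traffic K r phi' t' ->
  \sum_(a : A) \sum_(i : V) r i a * p i a 0%N <= linearized_cost K L w c g phi' t'.
Proof.
move=> phi'_valid t'_traffic; have [_ _ phi'_last _] := phi'_valid.
rewrite (linearized_cost_decomposition L w c g p phi'_last t'_traffic).
apply: ler_sum => a _; rewrite lerDl; apply: sumr_ge0 => k _; apply: sumr_ge0 => i _.
have [t'_ge0 _ _] := t'_traffic; have k_le : (k <= K a)%N by rewrite -ltnS.
by rewrite mulr_ge0 ?t'_ge0 // subr_ge0 marginal_le_expected_hop_cost.
Qed.
End Optimality.

Theorem theorem2 (R : realType) (V A : finType) (E : rel V) (dest : A -> V)
    (K : A -> nat) (L : A -> nat -> R) (w : V -> A -> nat -> R) (r : V -> A -> R)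
    (D : V -> V -> R -> R) (Ddom : V -> V -> R -> Prop) (D' : V -> V -> R -> R)
    (C : V -> R -> R) (Cdom : V -> R -> Prop) (C' : V -> R -> R)
    (phi : strategy R V A) (t : V -> A -> nat -> R) (p : V -> A -> nat -> R) :
  (forall i j, E i j -> E j i) ->
  (forall i j, connect E i j) ->
  (forall a k, (k <= K a)%N -> 0 < L a k) ->
  (forall i a k, (k <= K a)%N -> 0 < w i a k) ->
  (forall i a, 0 <= r i a) ->
  (forall i j, E i j -> cost_fun (D i j) (Ddom i j) (D' i j)) ->
  (forall i, cost_fun (C i) (Cdom i) (C' i)) ->
  feasible E dest K L w r Ddom Cdom phi t ->
  is_marginal dest K L w D' C' phi t p ->
  (forall i j a k, (k <= K a)%N ->
     (0 < phi i j a k ->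
        delta E K L w D' C' phi t p i j a k = min_delta E K L w D' C' phi t p i a k) /\
     (phi i j a k = 0 ->
        (min_delta E K L w D' C' phi t p i a k <= delta E K L w D' C' phi t p i j a k)%E)) ->
  forall (phi' : strategy R V A) (t' : V -> A -> nat -> R),
    feasible E dest K L w r Ddom Cdom phi' t' ->
    total_cost E K L w D C phi t <= total_cost E K L w D C phi' t'.
Proof.
move=> _ _ _ _ _ D_cost C_cost feas p_marginal opt phi' t' feas'.
have [phi_valid t_traffic _ _] := feas; have [phi'_valid t'_traffic _ _] := feas'.
have phi_argmin i j a k k_le := (opt i j a k k_le).1.
apply: le_trans (total_cost_tangent_le D_cost C_cost feas feas').
rewrite lerDl subr_ge0 (linearized_cost_marginal phi_valid p_marginal t_traffic).
exact: (marginal_le_linearized_cost phi_valid p_marginal phi_argmin).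
Qed.
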